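(* Let $d\ge1$, $N\ge2$, $\alpha\ge1$, $P=(0,N)^d\cap\mathbb{Z}^d$, and let ALG process an arbitrary finite online sequence of sets $O_1\cap P,\dots,O_m\cap P$, where each $O_j\subseteq(0,N)^d$ is open, $\alpha$-fat, with $O_j\cap P\ne\emptyset$. Let $\mathcal{S}'$ be the set of indices $j$ such that $O_j\cap P$ was not hit (i.e. disjoint from ALG's current set $P'$) at its arrival. Then for every integer $l\ge0$ and every $p\in P$, the number of $j\in\mathcal{S}'$ with $\ell(O_j)=l$ and $p\in O_j$ is at most $(4\alpha+1)^d$.
   Context: A $d$-cube is an axis-parallel hypercube; width = side length. In-width of $O$: supremum of widths of $d$-cubes contained in $O$; out-width: infimum of widths of $d$-cubes containing $O$; a nonempty bounded open $O$ is $\alpha$-fat if out-width$(O)\le\alpha\cdot$in-width$(O)$. For a positive integer $i$, $\ell(i)$ is the largest $k\ge0$ with $2^k\mid i$; for $x\in P$, $\ell(x)=\min_i\ell(x_i)$; $\ell(O)=\max\{\ell(x):x\in O\cap P\}$. Algorithm ALG: start with $P'=\emptyset$; when $O\cap P$ arrives, if $O\cap P'\ne\emptyset$ do nothing, otherwise add to $P'$ all points of $O\cap P$ of level $\ell(O)$. *)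

From mathcomp Require Import all_boot.
From mathcomp Require Import boolp.
From Stdlib Require Import Reals.

Set Implicit Arguments.
Unset Strict Implicit.
Unset Printing Implicit Defensive.

Definition pointR (d : nat) := 'I_d -> R.
Definition regionR (d : nat) := pointR d -> Prop.

(* Open in R^d (for the sup-norm balls, which generate the usual topology). *)
Definition openR (d : nat) (O : regionR d) : Prop :=
  forall x, O x -> exists eps : R, (0 < eps)%R /\
    forall y : pointR d, (forall i, Rabs (y i - x i) < eps)%R -> O y.

Definition cube (d : nat) (c : pointR d) (w : R) : regionR d :=
  fun x => forall i, (c i <= x i <= c i + w)%R.

Definition inwidth_set (d : nat) (O : regionR d) : R -> Prop :=
  fun w => (0 <= w)%R /\ exists c, forall x, cube c w x -> O x.
Definition outwidth_set (d : nat) (O : regionR d) : R -> Prop :=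
  fun w => (0 <= w)%R /\ exists c, forall x, O x -> cube c w x.

Definition is_glb (E : R -> Prop) (m : R) : Prop :=
  (forall x, E x -> (m <= x)%R) /\ (forall b, (forall x, E x -> (b <= x)%R) -> (b <= m)%R).

Definition in_width (d : nat) (O : regionR d) (a : R) : Prop := is_lub (inwidth_set O) a.
Definition out_width (d : nat) (O : regionR d) (b : R) : Prop := is_glb (outwidth_set O) b.

Definition nonempty_bounded (d : nat) (O : regionR d) : Prop :=
  (exists x, O x) /\ exists B : R, forall x, O x -> forall i, (Rabs (x i) <= B)%R.

Definition fat (d : nat) (alpha : R) (O : regionR d) : Prop :=
  nonempty_bounded O /\ openR O /\
  exists a b, in_width O a /\ out_width O b /\ (b <= alpha * a)%R.

(* Integer grid P = (0,N)^d ∩ Z^d, represented by 'I_d -> nat. *)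
Definition gpt (d : nat) := 'I_d -> nat.
Definition inP (d N : nat) (x : gpt d) : Prop := forall i, 0 < x i < N.
Definition toR (d : nat) (x : gpt d) : pointR d := fun i => INR (x i).

Definition ell_nat (i : nat) : nat := logn 2 i.
(* ell(x) = min_i ell(x_i).  (The seed \max_i ell(x_i) is >= every term, so for
   d >= 1 this is exactly the minimum.) *)
Definition ell_pt (d : nat) (x : gpt d) : nat :=
  let seed := \max_(i < d) ell_nat (x i) in
  \big[minn/seed]_(i < d) ell_nat (x i).

Definition ell_set_is (d N : nat) (O : regionR d) (l : nat) : Prop :=
  (exists x, inP N x /\ O (toR x) /\ ell_pt x = l) /\
  (forall x, inP N x -> O (toR x) -> ell_pt x <= l).

Definition hits (d N : nat) (P' : gpt d -> Prop) (O : regionR d) : Prop :=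
  exists y, P' y /\ inP N y /\ O (toR y).

Definition alg_step (d N : nat) (P' : gpt d -> Prop) (O : regionR d) : gpt d -> Prop :=
  fun x => P' x \/
    (~ hits N P' O /\ inP N x /\ O (toR x) /\
       forall y, inP N y -> O (toR y) -> ell_pt y <= ell_pt x).

(* ALG's set P' after processing O 0, ..., O (j-1). *)
Fixpoint alg_state (d N : nat) (O : nat -> regionR d) (j : nat) : gpt d -> Prop :=
  match j with
  | 0 => fun _ => False
  | j'.+1 => alg_step N (alg_state N O j') (O j')
  end.

Definition unhit (d N : nat) (O : nat -> regionR d) (j : nat) : Prop :=
  ~ hits N (alg_state N O j) (O j).

From HB Require Import structures.
From mathcomp Require Import all_boot.
From mathcomp Require Import boolp.
From Stdlib Require Import Reals Lra ZArith.

Set Implicit Arguments.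
Unset Strict Implicit.
Unset Printing Implicit Defensive.

(* Fix the level l and the grid point p, and let S be the set of
   unhit indices j with ell(O_j) = l and p in O_j.  For every j in S choose a
   grid point q_j of O_j of level l.
   - Distinctness: when O_j arrives unhit, ALG adds all points of O_j of level
     l, so q_k (k > j) cannot lie in O_j, otherwise O_k would be hit; hence
     j |-> q_j is injective on S.
   - Localisation: a cube of width > 2^(l+1) inside (0,N)^d contains a grid
     point of level > l, so in-width(O_j) <= 2^(l+1), and by fatness every
     coordinate of O_j varies by at most alpha * 2^(l+1).  As p lies in every
     O_j, the q_j differ by less than K * 2^l per coordinate, where K is a
     natural number in (4 alpha, 4 alpha + 1].
   - Counting: the coordinates of the q_j are multiples of 2^l, so the
     residues (q_j i / 2^l mod K)_i determine q_j, giving |S| <= K^d.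
   The file proves facts about levels, then the real-number and geometric
   estimates, then the property of ALG, then the counting lemma, and finally
   assembles them. *)

(* minn is associative and commutative, so [bigD1] splits the minimum [ell_pt]. *)
HB.instance Definition _ := SemiGroup.isComLaw.Build nat minn minnA minnC.

Lemma ell_pt_le (d : nat) (x : gpt d) (i : 'I_d) : ell_pt x <= ell_nat (x i).
Proof.
by rewrite /ell_pt; set s := \max_(_ < _) _; rewrite (bigD1 i) //= geq_minl.
Qed.

Lemma ell_pt_ge (d : nat) (x : gpt d) (k : nat) :
  0 < d -> (forall i, k <= ell_nat (x i)) -> k <= ell_pt x.
Proof.
move=> d_gt0 k_le; rewrite /ell_pt.
have seed_ge : k <= \max_(i < d) ell_nat (x i).
  exact: leq_trans (k_le (Ordinal d_gt0)) (leq_bigmax (Ordinal d_gt0)).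
by apply: (big_rec (fun v => k <= v) seed_ge) => i v _ k_le_v; rewrite leq_min k_le.
Qed.

Lemma pow2_dvd_ell (k n : nat) : 0 < n -> (expn 2 k %| n) = (k <= ell_nat n).
Proof. exact: pfactor_dvdn. Qed.

Lemma level_dvd_coord (d N l : nat) (y : gpt d) (i : 'I_d) :
  inP N y -> l <= ell_pt y -> expn 2 l %| y i.
Proof.
move=> Py l_le; rewrite pow2_dvd_ell; last by case/andP: (Py i).
exact: leq_trans l_le (ell_pt_le y i).
Qed.

Lemma INR_ltn (m n : nat) : (INR m < INR n)%R -> m < n.
Proof. by move/INR_lt/ltP. Qed.

Lemma INR_expn (m n : nat) : INR (expn m n) = (INR m ^ n)%R.
Proof. by elim: n => [//|n IH]; rewrite expnS mult_INR IH. Qed.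

Lemma subn_lt_of_INR (a b c : nat) :
  0 < c -> (INR a - INR b < INR c)%R -> a - b < c.
Proof.
move=> c_gt0 lt_c; case: (leqP a b) => [|ba]; first by rewrite -subn_eq0 => /eqP ->.
by apply: INR_ltn; rewrite minus_INR //; apply/leP; exact: ltnW.
Qed.

Definition in_open_box (d N : nat) (O : regionR d) : Prop :=
  forall x, O x -> forall i, (0 < x i < INR N)%R.

Lemma nat_multiple_in_interval (c w W : R) :
  (0 <= c)%R -> (0 < W)%R -> (W <= w)%R -> exists k : nat, (c <= INR k * W <= c + w)%R.
Proof.
move=> c_ge0 W_gt0 W_le_w; have [up_gt up_le] := archimed (c / W).
have cW_ge0 : (0 <= c / W)%R by exact: Rle_mult_inv_pos.
have up_ge0 : (0 <= up (c / W))%Z by apply: le_IZR; lra.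
exists (Z.to_nat (up (c / W))); rewrite INR_IZR_INZ Z2Nat.id //.
have cW_W : (c / W * W = c)%R by field; lra.
split; nra.
Qed.

Lemma nat_above (r : R) : (0 <= r)%R -> exists K : nat, (r < INR K <= r + 1)%R.
Proof.
move=> r_ge0; have [up_gt up_le] := archimed r.
have up_ge0 : (0 <= up r)%Z by apply: le_IZR; lra.
by exists (Z.to_nat (up r)); rewrite INR_IZR_INZ Z2Nat.id //; lra.
Qed.

(* A region inside (0,N)^d all of whose grid points have level <= l has
   in-width <= 2^(l+1): a wider cube contains a grid point whose coordinates
   are all positive multiples of 2^(l+1), i.e. a point of level > l. *)
Lemma in_width_le_level (d N l : nat) (O : regionR d) (a : R) :
  0 < d -> in_open_box N O ->
  (forall x, inP N x -> O (toR x) -> ell_pt x <= l) ->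
  in_width O a -> (a <= INR (expn 2 l.+1))%R.
Proof.
move=> d_gt0 O_box O_level [_ a_lub]; apply: a_lub => w [w_ge0 [c cube_in_O]].
apply: Rnot_lt_le; set W := INR (expn 2 l.+1) => W_lt_w.
have W_gt0 : (0 < W)%R by apply: lt_0_INR; apply/ltP; rewrite expn_gt0.
have c_gt0 i : (0 < c i)%R.
  by apply: (proj1 (O_box c (cube_in_O c _) i)) => j; lra.
have /choice [k k_in] : forall i, exists k : nat, (c i <= INR k * W <= c i + w)%R.
  by move=> i; apply: nat_multiple_in_interval => //; apply: Rlt_le.
pose x : gpt d := fun i => k i * expn 2 l.+1.
have Ox : O (toR x) by apply: cube_in_O => i; rewrite /toR /x mult_INR; exact: k_in.
have Px : inP N x.
  by move=> i; have [x_gt0 x_ltN] := O_box _ Ox i; rewrite !INR_ltn.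
have level_gt : l < ell_pt x.
  apply: ell_pt_ge => // i; rewrite -pow2_dvd_ell ?dvdn_mull //.
  by case/andP: (Px i).
by have := O_level x Px Ox; rewrite leqNgt level_gt.
Qed.

Lemma fat_coord_spread (d : nat) (alpha W : R) (O : regionR d) (x y : pointR d) (i : 'I_d) :
  (0 <= alpha)%R -> fat alpha O -> (forall a, in_width O a -> (a <= W)%R) ->
  O x -> O y -> (x i - y i <= alpha * W)%R.
Proof.
move=> alpha_ge0 [_ [_ [a [b [a_in [b_out b_le]]]]]] a_le Ox Oy.
have spread_le_b : (x i - y i <= b)%R.
  apply: (proj2 b_out) => w [_ [c O_in_cube]].
  by have := O_in_cube _ Ox i; have := O_in_cube _ Oy i; lra.
by have := a_le a a_in; nra.
Qed.

Lemma level_coord_spread (d N l : nat) (alpha : R) (O : regionR d) (x y : pointR d)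
    (i : 'I_d) :
  0 < d -> (0 <= alpha)%R -> in_open_box N O ->
  fat alpha O -> ell_set_is N O l -> O x -> O y ->
  (x i - y i <= alpha * INR (expn 2 l.+1))%R.
Proof.
move=> d_gt0 alpha_ge0 O_box O_fat [_ O_level]; apply: fat_coord_spread => // a.
exact: in_width_le_level d_gt0 O_box O_level.
Qed.

Lemma common_point_spread (d N l K : nat) (alpha : R) (O1 O2 : regionR d)
    (p x y : gpt d) (i : 'I_d) :
  0 < d -> (1 <= alpha)%R -> (4 * alpha < INR K)%R ->
  in_open_box N O1 -> in_open_box N O2 -> fat alpha O1 -> fat alpha O2 ->
  ell_set_is N O1 l -> ell_set_is N O2 l ->
  O1 (toR p) -> O2 (toR p) -> O1 (toR x) -> O2 (toR y) -> x i - y i < K * expn 2 l.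
Proof.
move=> d_gt0 alpha_ge1 K_gt O1_box O2_box O1_fat O2_fat level1 level2 O1p O2p O1x O2y.
have alpha_ge0 : (0 <= alpha)%R by lra.
have U_gt0 : (0 < INR (expn 2 l))%R by apply: lt_0_INR; apply/ltP; rewrite expn_gt0.
apply: subn_lt_of_INR; first by rewrite muln_gt0 expn_gt0 andbT; apply: INR_ltn; rewrite /=; lra.
have := level_coord_spread i d_gt0 alpha_ge0 O1_box O1_fat level1 O1x O1p.
have := level_coord_spread i d_gt0 alpha_ge0 O2_box O2_fat level2 O2p O2y.
rewrite /toR expnS !mult_INR (_ : INR 2 = 2%R) // => spread_p_y spread_x_p; nra.
Qed.

Lemma alg_state_mono (d N : nat) (O : nat -> regionR d) (j k : nat) (x : gpt d) :
  j <= k -> alg_state N O j x -> alg_state N O k x.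
Proof.
elim: k => [|k IH]; first by rewrite leqn0 => /eqP ->.
by rewrite leq_eqVlt => /orP [/eqP -> //| j_lt] /(IH j_lt); left.
Qed.

(* When O_j of level l arrives unhit, ALG adds all its grid points of level l;
   so such a point cannot lie in a later region O_k that arrives unhit. *)
Lemma unhit_later_avoids (d N : nat) (O : nat -> regionR d) (j k l : nat) (q : gpt d) :
  j < k -> unhit N O j -> unhit N O k -> ell_set_is N (O j) l ->
  inP N q -> O k (toR q) -> ell_pt q = l -> ~ O j (toR q).
Proof.
move=> j_lt_k unhit_j unhit_k [_ Oj_level] Pq Okq q_level Ojq.
apply: unhit_k; exists q; split=> //; apply: (alg_state_mono j_lt_k).
by right; do 3!split=> //; move=> y Py Oy; rewrite q_level; apply: Oj_level.
Qed.

Lemma inj_of_later_avoid (m : nat) (T : Type) (S : {set 'I_m}) (A : 'I_m -> T -> Prop)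
    (q : 'I_m -> T) :
  (forall j, j \in S -> A j (q j)) ->
  (forall j k, j \in S -> k \in S -> j < k -> ~ A j (q k)) -> {in S &, injective q}.
Proof.
move=> qA avoid j k jS kS qjk; case: (ltngtP j k) => [jk|kj|/val_inj //].
- by case: (avoid j k jS kS jk); rewrite -qjk; apply: qA.
- by case: (avoid k j kS jS kj); rewrite qjk; apply: qA.
Qed.

Lemma eq_mod_window (K a b : nat) : a = b %[mod K] -> a - b < K -> b - a < K -> a = b.
Proof.
wlog b_le_a : a b / b <= a.
  by move=> hw; case: (leqP b a) => [|/ltnW] ab ? ? ?; [|apply/esym]; apply: hw.
move=> /eqP; rewrite eqn_mod_dvd // => K_dvd ab_lt _.
have : a - b == 0.
  by rewrite eqn0Ngt; apply/negP => /dvdn_leq/(_ K_dvd); rewrite leqNgt ab_lt.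
by rewrite subn_eq0 => a_le_b; apply/eqP; rewrite eqn_leq a_le_b.
Qed.

(* Lattice pigeonhole: distinct points whose coordinates are multiples of U and
   pairwise differ by less than K * U are determined by their coordinates
   divided by U taken modulo K; so there are at most K^d of them. *)
Lemma card_spread_lattice (I : finType) (S : {set I}) (d U K : nat) (q : I -> gpt d) :
  0 < U -> 0 < K -> {in S &, injective q} ->
  (forall j, j \in S -> forall i, U %| q j i) ->
  (forall j k, j \in S -> k \in S -> forall i, q j i - q k i < K * U) ->
  #|S| <= expn K d.
Proof.
move=> U_gt0 K_gt0 q_inj U_dvd spread.
pose f j : {ffun 'I_d -> 'I_K} := [ffun i => Ordinal (ltn_pmod (q j i %/ U) K_gt0)].
have f_inj : {in S &, injective f}.
  move=> j k jS kS fjk; apply: q_inj => //; apply: funext => i.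
  have := congr1 (fun g : {ffun 'I_d -> 'I_K} => val (g i)) fjk; rewrite !ffunE /= => mod_eq.
  rewrite -(divnK (U_dvd j jS i)) -(divnK (U_dvd k kS i)); congr (_ * _).
  by apply: eq_mod_window mod_eq _ _; rewrite -(ltn_pmul2r U_gt0) mulnBl !divnK ?U_dvd ?spread.
rewrite -(card_in_imset f_inj); apply: leq_trans (max_card _) _.
by rewrite card_ffun !card_ord.
Qed.

Theorem mainTheorem6 (d N m : nat) (alpha : R) (O : nat -> regionR d) :
  1 <= d -> 2 <= N -> (1 <= alpha)%R ->
  (forall j, j < m ->
     [/\ forall x : pointR d, O j x -> forall i, (0 < x i < INR N)%R,
         fat alpha (O j)
       & exists x : gpt d, inP N x /\ O j (toR x)]) ->
  forall (l : nat) (p : gpt d), inP N p ->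
    (INR #|[set j : 'I_m | `[< unhit N O j /\ ell_set_is N (O j) l /\ O j (toR p) >]]|
       <= (4 * alpha + 1) ^ d)%R.
Proof.
move=> d_gt0 _ alpha_ge1 O_ok l p Pp.
set S := [set j : 'I_m | _].
have inS j : j \in S -> [/\ unhit N O j, ell_set_is N (O j) l & O j (toR p)].
  by rewrite inE => /asboolP [? []].
have /choice [q q_spec] : forall j : 'I_m, exists y : gpt d,
    j \in S -> [/\ inP N y, O j (toR y) & ell_pt y = l].
  move=> j; case: (boolP (j \in S)) => [/inS [_ [[y [? [? ?]]] _] _] | _].
  - by exists y.
  - by exists (fun _ => 0).
have q_inj : {in S &, injective q}.
  apply: (@inj_of_later_avoid _ _ _ (fun j y => O j (toR y))) => [j /q_spec [] //|].
  move=> j k jS kS jk; have [unhit_j level_j _] := inS j jS.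
  have [unhit_k _ _] := inS k kS; have [Pq Oq level_q] := q_spec k kS.
  exact: unhit_later_avoids jk unhit_j unhit_k level_j Pq Oq level_q.
have [K [K_gt K_le]] : exists K : nat, (4 * alpha < INR K <= 4 * alpha + 1)%R.
  by apply: nat_above; lra.
have K_gt0 : 0 < K by apply: INR_ltn; rewrite /=; lra.
have spread j k : j \in S -> k \in S -> forall i, q j i - q k i < K * expn 2 l.
  move=> jS kS i; have [_ level_j Ojp] := inS j jS; have [_ level_k Okp] := inS k kS.
  have [Oj_box Oj_fat _] := O_ok j (ltn_ord j); have [Ok_box Ok_fat _] := O_ok k (ltn_ord k).
  have [_ Ojq _] := q_spec j jS; have [_ Okq _] := q_spec k kS.
  exact: common_point_spread d_gt0 alpha_ge1 K_gt Oj_box Ok_box Oj_fat Ok_fat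
    level_j level_k Ojp Okp Ojq Okq.
have card_S : #|S| <= expn K d.
  apply: card_spread_lattice (expn_gt0 2 l) K_gt0 q_inj _ spread.
  by move=> j /q_spec [Pq _ level_q] i; apply: level_dvd_coord Pq _; rewrite level_q.
apply: Rle_trans (le_INR _ _ (leP card_S)) _; rewrite INR_expn.
by apply: pow_incr; split; [exact: pos_INR | lra].
Qed.
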